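(* Let $(X,\mathcal{O})$ be a sober topological space and $P \subseteq X$ with subspace topology $\mathcal{O}|_P=\{U\cap P\mid U\in\mathcal{O}\}$. Let $j : \mathcal{O} \to \mathcal{O}$ be $j(U) = \bigcup\{V \in \mathcal{O} \mid V \cap P \subseteq U \cap P\}$ and $\widetilde{P} = \{U \in \mathcal{O} \mid j(U)=U\}$. For $x \in X$ let $\widetilde{x} = X \setminus \overline{\{x\}}$. Then the following are equivalent: (i) $(P,\mathcal{O}|_P)$ is sober; (ii) for every $x \in X$, $x \in P$ if and only if $\widetilde{x} \in \widetilde{P}$.
   Context: A point of a frame $L$ is a completely prime filter: an upward-closed subset containing the top, closed under binary meets, and such that if $\bigvee S$ belongs to it then some element of $S$ does. For a space $(X,\mathcal{O})$ and $x\in X$, $\mathcal{F}_x=\{U\in\mathcal{O}\mid x\in U\}$; the space is sober if every point of the frame $\mathcal{O}$ (ordered by inclusion) is $\mathcal{F}_x$ for a unique $x$. *)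

From HB Require Import structures.
From mathcomp Require Import all_boot all_classical topology.
Set Implicit Arguments. Unset Strict Implicit. Unset Printing Implicit Defensive.
Local Open Scope classical_set_scope.

(* A point of the frame of opens O (ordered by inclusion; binary meet = intersection,
   arbitrary join = union): a completely prime filter. *)
Definition frame_point (T : Type) (O : set (set T)) (F : set (set T)) : Prop :=
  [/\ F `<=` O,
      (forall U V, F U -> O V -> U `<=` V -> F V),
      F setT,
      (forall U V, F U -> F V -> F (U `&` V)) &
      (forall S : set (set T), S `<=` O ->
         F (\bigcup_(V in S) V) -> exists2 V, S V & F V)].

Definition point_filter (T : Type) (O : set (set T)) (x : T) : set (set T) :=
  [set U | O U /\ U x].

Definition sober_family (T : Type) (O : set (set T)) : Prop :=
  forall F, frame_point O F -> exists! x : T, F = point_filter O x.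

Definition induced_opens (T : topologicalType) (P : set T) : set (set {x | P x}) :=
  [set V | exists2 U : set T, open U & V = (@proj1_sig T P) @^-1` U].

Definition jP (T : topologicalType) (P : set T) (U : set T) : set T :=
  \bigcup_(V in [set V : set T | open V /\ V `&` P `<=` U `&` P]) V.

Definition Ptilde (T : topologicalType) (P : set T) : set (set T) :=
  [set U | open U /\ jP P U = U].

Definition xtilde (T : topologicalType) (x : T) : set T :=
  ~` closure [set x].

From HB Require Import structures.
From mathcomp Require Import all_boot all_classical topology.
Local Open Scope classical_set_scope.

(** Opens of the subspace [P] are traces [U ∩ P] of opens [U] of [X], so
   completely prime filters can be moved back and forth: a filter [G] of
   subspace opens lifts to the filter of opens whose trace is in [G], and a
   point filter [F_x] of [X] traces down to the family of traces of
   neighbourhoods of [x]. The lift of a point of [P] is always a point of [X],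
   hence of the form [F_x]; the trace of [F_x] is a point of [P] exactly when
   [x~] is [j]-fixed, i.e. when no open neighbourhood of [x] has its trace
   inside [x~], the largest open missing [x]. Sobriety of [P] then amounts to
   [x] lying in [P] for all such [x], and conversely. *)

Lemma open_xtilde {T : topologicalType} (x : T) : open (xtilde x).
Proof. exact/closed_openC/closed_closure. Qed.

Lemma xtilde_notin {T : topologicalType} (x : T) : ~ xtilde x x.
Proof. by apply; apply: subset_closure. Qed.

Lemma open_sub_xtilde {T : topologicalType} {x : T} {U : set T} :
  open U -> ~ U x -> U `<=` xtilde x.
Proof.
move=> oU nUx y Uy cl_y.
by have [z [/= -> Uz]] := cl_y U (open_nbhs_nbhs (conj oU Uy)).
Qed.

Lemma point_filter_frame_point {T : topologicalType} (x : T) :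
  frame_point open (point_filter open x).
Proof.
split.
- by move=> U [].
- by move=> U V [_ Ux] oV /(_ x Ux).
- by split=> //; exact: openT.
- by move=> U V [oU Ux] [oV Vx]; split; [exact: openI | split].
- by move=> S SO [_ [V SV Vx]]; exists V => //; split=> //; exact: SO.
Qed.

Lemma sober_point_filter_inj {T : topologicalType} :
  sober_family (@open T) -> injective (point_filter (@open T)).
Proof.
move=> sT x y exy; have [z [_ z_uniq]] := sT _ (point_filter_frame_point x).
by rewrite -(z_uniq x) // (z_uniq y).
Qed.

Section Subspace.
Context {T : topologicalType} {P : set T}.

Local Notation trace U := (@proj1_sig T P @^-1` U).

Definition ambient_filter (G : set (set {x | P x})) : set (set T) :=
  [set U | open U /\ G (trace U)].

Definition trace_filter (F : set (set T)) : set (set {x | P x}) :=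
  [set W | exists2 U, F U & W = trace U].

Lemma Ptilde_xtildeP (x : T) :
  Ptilde P (xtilde x) <-> forall V, open V -> V `&` P `<=` xtilde x -> ~ V x.
Proof.
split=> [[_ jx] V oV VP Vx | xmax].
  apply: (xtilde_notin x); rewrite -jx; exists V => //.
  by split=> // y [Vy Py]; split=> //; exact: VP.
split; first exact: open_xtilde.
apply/seteqP; split=> [y [V [oV VP] Vy] | y xy].
  have nVx : ~ V x by apply: xmax oV _ => z /VP[].
  exact: open_sub_xtilde oV nVx _ Vy.
by exists (xtilde x) => //; split=> //; exact: open_xtilde.
Qed.

Lemma Ptilde_xtilde (x : T) : P x -> Ptilde P (xtilde x).
Proof.
by move=> Px; apply/Ptilde_xtildeP => V _ VP Vx; exact: xtilde_notin (VP x _).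
Qed.

Lemma ambient_filter_frame_point {G : set (set {x | P x})} :
  frame_point (@induced_opens T P) G -> frame_point open (ambient_filter G).
Proof.
case=> _ G_up GT GI G_cp; split.
- by move=> U [].
- move=> U V [_ GU] oV UV; split=> //.
  by apply: G_up GU _ _ => [|z /UV //]; exists V.
- by split; [exact: openT | rewrite preimage_setT].
- move=> U V [oU GU] [oV GV]; split; first exact: openI.
  by rewrite preimage_setI; exact: GI.
- move=> S SO [_]; rewrite preimage_bigcup -(bigcup_image S (preimage sval) id).
  case/G_cp => [_ [V SV <-] | _ [V SV <-] GV]; first by exists V => //; exact: SO.
  by exists V => //; split => //; exact: SO.
Qed.

Lemma ambient_point_filter (p : {x | P x}) :
  ambient_filter (point_filter (@induced_opens T P) p) = point_filter open (sval p).
Proof.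
apply/seteqP; split=> U [oU Up]; split=> //; first exact: Up.2.
by split => //; exists U.
Qed.

Lemma trace_ambient_filter {G : set (set {x | P x})} :
  frame_point (@induced_opens T P) G -> trace_filter (ambient_filter G) = G.
Proof.
case=> GO _ _ _ _; apply/seteqP; split=> [W [U [_ GU] ->] // | W GW].
by have [U oU eW] := GO W GW; exists U => //; split=> //; rewrite -eW.
Qed.

Lemma trace_point_filter (p : {x | P x}) :
  trace_filter (point_filter open (sval p)) = point_filter (@induced_opens T P) p.
Proof.
apply/seteqP; split=> [W [U [oU Up] ->] | W [[U oU eW] Wp]].
  by split=> //; exists U.
by exists U => //; split=> //; move: Wp; rewrite eW.
Qed.

Lemma ambient_point_Ptilde_xtilde {G : set (set {x | P x})} (x : T) :
  frame_point (@induced_opens T P) G -> ambient_filter G = point_filter open x ->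
  Ptilde P (xtilde x).
Proof.
case=> _ G_up _ _ _ Gx; apply/Ptilde_xtildeP => V oV VP Vx.
apply: (xtilde_notin x).
have [_ GV] : ambient_filter G V by rewrite Gx.
suff : ambient_filter G (xtilde x) by rewrite Gx => -[].
split; first exact: open_xtilde.
apply: G_up GV _ _ => [|[y Py] Vy]; last exact: VP.
by exists (xtilde x) => //; exact: open_xtilde.
Qed.

Section TildeFixed.
Context {x : T}.
Hypothesis xtilde_fixed : Ptilde P (xtilde x).

Let open_trace_sub_xtilde V : open V -> V `&` P `<=` xtilde x -> ~ V x.
Proof. by move: V; apply/Ptilde_xtildeP. Qed.

Let trace_sub_nbhs (U V : set T) :
  open U -> open V -> V x -> trace V `<=` trace U -> U x.
Proof.
move=> oU oV Vx VU; apply: contrapT => nUx.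
apply: (open_trace_sub_xtilde V oV _ Vx) => y [Vy Py].
by apply: (open_sub_xtilde oU nUx); exact: (VU (exist _ y Py)).
Qed.

Lemma trace_point_filter_frame_point :
  frame_point (@induced_opens T P) (trace_filter (point_filter open x)).
Proof.
split.
- by move=> W [U [oU _] ->]; exists U.
- move=> W W' [U [oU Ux] eW] [U' oU' eW'] WW'.
  exists U' => //; split=> //; apply: trace_sub_nbhs oU' oU Ux _.
  by rewrite -eW -eW'.
- by exists setT; [split=> //; exact: openT | rewrite preimage_setT].
- move=> W W' [U [oU Ux] ->] [U' [oU' U'x] ->].
  by exists (U `&` U'); [split; [exact: openI | split] | rewrite preimage_setI].
- move=> S SO [U [oU Ux] eS]; apply: contrapT => nS.
  apply: (open_trace_sub_xtilde U oU _ Ux) => y [Uy Py].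
  have [W SW Wy] : (\bigcup_(W in S) W) (exist _ y Py) by rewrite eS.
  have [V oV eW] := SO W SW; move: Wy; rewrite eW; apply: (open_sub_xtilde oV).
  by move=> Vx; apply: nS; exists W => //; exists V.
Qed.

Lemma ambient_trace_point_filter :
  ambient_filter (trace_filter (point_filter open x)) = point_filter open x.
Proof.
apply/seteqP; split=> [U [oU [V [oV Vx] eVU]] | U [oU Ux]].
  by split=> //; apply: trace_sub_nbhs oU oV Vx _; rewrite eVU.
by split=> //; exists U.
Qed.

End TildeFixed.

End Subspace.

Theorem mainTheorem3 (T : topologicalType) (P : set T)
  (hsober : @sober_family T (@open T)) :
  sober_family (@induced_opens T P) <->
  (forall x : T, P x <-> @Ptilde T P (@xtilde T x)).
Proof.
have pf_inj := sober_point_filter_inj hsober.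
split=> [sP x | tildeP G FG].
  split=> [|xtilde_fixed]; first exact: Ptilde_xtilde.
  have [p [Gp _]] := sP _ (trace_point_filter_frame_point xtilde_fixed).
  have := ambient_trace_point_filter xtilde_fixed.
  by rewrite Gp ambient_point_filter => /pf_inj <-; exact: svalP.
have [x [Gx _]] := hsober _ (ambient_filter_frame_point FG).
have Px : P x by apply/tildeP; exact: ambient_point_Ptilde_xtilde FG Gx.
exists (exist _ x Px); split.
  by rewrite -(trace_ambient_filter FG) Gx (trace_point_filter (exist _ x Px)).
move=> [y Py] Gy; apply: eq_exist; apply: pf_inj.
by rewrite -Gx Gy; exact: (ambient_point_filter (exist _ y Py)).
Qed.
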